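(* Let $X$ be a real linear metric space and let $f:X\to\mathbb{R}$ be a sublinear function. Then $f$ is bounded above on some shift-compact set in $X$ if and only if $f$ is continuous.
   Context: A real linear metric space is a real topological vector space whose topology is given by an invariant metric. A function $f:X\to\mathbb{R}$ is sublinear if $f(x+y)\le f(x)+f(y)$ for all $x,y\in X$ and $f(nx)=nf(x)$ for all $x\in X$, $n\in\mathbb{N}$. A set $A\subset X$ is shift-compact if for every sequence $(x_n)$ tending to $0$ in $X$ there exists $x\in X$ such that $\{n\in\mathbb{N}: x+x_n\in A\}$ is infinite. *)

From HB Require Import structures.
From mathcomp Require Import all_boot all_order all_algebra.
From mathcomp Require Import all_classical all_reals all_analysis.
Set Implicit Arguments. Unset Strict Implicit. Unset Printing Implicit Defensive.
Import Order.TTheory GRing.Theory Num.Theory.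
Import numFieldTopology.Exports.
Local Open Scope classical_set_scope.
Local Open Scope ring_scope.

Definition invariant_metric (R : realType) (X : topologicalLmodType R)
    (d : X -> X -> R) : Prop :=
  (forall x y, 0 <= d x y) /\
      (forall x y, d x y = 0 <-> x = y) /\
      (forall x y, d x y = d y x) /\
      (forall x y z, d x z <= d x y + d y z) /\
      (forall x y z, d (x + z) (y + z) = d x y) /\
      (forall x : X, nbhs x = filter_from [set e : R | 0 < e]
                                (fun e => [set y | d x y < e])).

Definition linear_metric_space (R : realType) (X : topologicalLmodType R) : Prop :=
  exists d : X -> X -> R, invariant_metric d.

Definition sublinear (R : realType) (X : topologicalLmodType R) (f : X -> R) : Prop :=
  (forall x y, f (x + y) <= f x + f y) /\
  (forall (n : nat) (x : X), f (n.+1%:R *: x) = n.+1%:R * f x).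

Definition shift_compact (R : realType) (X : topologicalLmodType R) (A : set X) : Prop :=
  forall u : nat -> X, u @ \oo --> (0 : X) ->
    exists x : X, infinite_set [set n : nat | A (x + u n)].

Definition bounded_above_on (R : realType) (X : Type) (f : X -> R) (A : set X) : Prop :=
  exists M : R, forall x, A x -> f x <= M.

From mathcomp Require Import all_boot all_order all_algebra.
From mathcomp Require Import all_classical all_reals all_analysis.
From mathcomp Require Import lra.
Import numFieldTopology.Exports.
Import Order.TTheory GRing.Theory Num.Theory.
Local Open Scope classical_set_scope.
Local Open Scope ring_scope.

(* Subadditivity gives f y - f x <= f (y - x), so f is continuous as soon as
   it is small near 0.  If f <= M on a shift-compact A but f is not small near
   0, pick h_n with f h_n >= e and (n+1) h_n -> 0 (possible since the metric
   gives a countable base at 0 and scaling is continuous).  A shift x puts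
   x + (n+1) h_n in A for infinitely many n, and then
   (n+1) e <= f ((n+1) h_n) <= f (x + (n+1) h_n) + f (-x) <= M + f (-x),
   which fails for large n.  Conversely a continuous f is bounded above on a
   neighbourhood of 0, and every neighbourhood of 0 is shift-compact
   (shift by x = 0). *)

Section SubadditiveContinuity.
Context {R : realType} {X : topologicalZmodType} {f : X -> R}.
Hypothesis f_subadd : forall x y, f (x + y) <= f x + f y.

Lemma subadditive_lerB x y : f y - f x <= f (y - x).
Proof. by rewrite lerBlDl -{1}(subrK x y) addrC f_subadd. Qed.

Lemma subadditive_continuous :
  (forall e, 0 < e -> \forall h \near 0, f h < e) -> continuous f.
Proof.
move=> f_small x; apply/cvgrPdist_lt => e e0.
have subx_cvg : (fun y => y - x) @ x --> (0 : X).
  rewrite -(subrr x); apply: (@continuous_comp _ _ _ (fun y => (y, x))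
    (fun z : X * X => z.1 - z.2)); last exact: sub_continuous.
  by apply: cvg_pair; [exact: cvg_id | exact: cvg_cst].
have xsub_cvg : (fun y => x - y) @ x --> (0 : X).
  rewrite -(subrr x); apply: (@continuous_comp _ _ _ (fun y => (x, y))
    (fun z : X * X => z.1 - z.2)); last exact: sub_continuous.
  by apply: cvg_pair; [exact: cvg_cst | exact: cvg_id].
near=> y; rewrite ltr_distlC.
have fyx : f (y - x) < e by near: y; exact: subx_cvg (f_small e e0).
have fxy : f (x - y) < e by near: y; exact: xsub_cvg (f_small e e0).
have := subadditive_lerB x y; have := subadditive_lerB y x.
by move=> *; apply/andP; split; lra.
Unshelve. all: by end_near. Qed.

End SubadditiveContinuity.

Lemma cofinite_set_near_infty (P : set nat) :
  (\forall n \near \oo, P n) -> cofinite_set P.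
Proof.
move=> [N _ PN]; apply: sub_finite_set (finite_II N) => n /= nPn.
by rewrite ltnNge; apply/negP => /PN.
Qed.

Section TopologicalLmodule.
Context {R : realType} {X : topologicalLmodType R}.

Lemma near0_scale (k : R) (U : set X) :
  nbhs 0 U -> \forall h \near 0, U (k *: h).
Proof.
have k0_cvg : (fun h : X => k *: h) @ 0 --> (0 : X).
  rewrite -[X in _ --> X](scaler0 _ k).
  apply: (@continuous_comp _ _ _ (fun h => (k : R^o, h))
    (fun z : R^o * X => z.1 *: z.2)); last exact: scale_continuous.
  by apply: (@cvg_pair _ _ _ _ (nbhs (k : R^o)));
    [exact: cvg_cst | exact: cvg_id].
by move=> U0; exact: k0_cvg U0.
Qed.

Lemma nbhs0_shift_compact (A : set X) : nbhs 0 A -> shift_compact A.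
Proof.
move=> A0 u u0; exists 0.
have Au : cofinite_set [set n | A (0 + u n)].
  apply: cofinite_set_near_infty; near=> n; rewrite /= add0r.
  by near: n; exact: u0.
exact: cofinite_set_infinite infinite_nat Au.
Unshelve. all: by end_near. Qed.

End TopologicalLmodule.

Section InvariantMetric.
Context {R : realType} {X : topologicalLmodType R} {d : X -> X -> R}.
Hypothesis d_inv : invariant_metric d.

Lemma nbhs_metricP (x : X) (U : set X) :
  nbhs x U <-> exists2 e : R, 0 < e & forall y, d x y < e -> U y.
Proof.
case: d_inv => _ [_ [_ [_ [_ ->]]]].
by split=> -[e e0 eU]; exists e => // y /eU.
Qed.

Lemma nbhs_metric_ball (x : X) (e : R) : 0 < e -> nbhs x [set y | d x y < e].
Proof. by move=> e0; apply/nbhs_metricP; exists e. Qed.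

Lemma cvg0_metric (u : nat -> X) :
  (forall n, d 0 (u n) < n.+1%:R^-1) -> u @ \oo --> (0 : X).
Proof.
move=> du U /nbhs_metricP[r r0 rU].
apply: filterS (near_infty_natSinv_lt (PosNum r0)) => n nr.
exact/rU/(lt_trans (du n) nr).
Qed.

Context {f : X -> R}.
Hypothesis f_subadd : forall x y, f (x + y) <= f x + f y.
Hypothesis f_natM : forall (n : nat) (x : X), f (n.+1%:R *: x) = n.+1%:R * f x.

Lemma shift_compact_bounded_small (A : set X) :
  shift_compact A -> bounded_above_on f A ->
  forall e, 0 < e -> \forall h \near 0, f h < e.
Proof.
move=> A_sc [M fA] e e0; apply: contrapT => f_not_small.
have large_at n : exists h, d 0 (n.+1%:R *: h) < n.+1%:R^-1 /\ e <= f h.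
  apply: contrapT => no_h; apply: f_not_small.
  have n_pos : 0 < n.+1%:R^-1 :> R by rewrite invr_gt0 ltr0Sn.
  apply: filterS (near0_scale n.+1%:R _ (nbhs_metric_ball 0 _ n_pos)) => h dh.
  by rewrite ltNge; apply/negP => efh; apply: no_h; exists h.
have [g gP] := choice large_at.
have [x xA] := A_sc _ (cvg0_metric _ (fun n => (gP n).1)).
have [n [Axn n_large]] : [set n | A (x + n.+1%:R *: g n)]
    `&` [set n : nat | M + f (- x) < n.+1%:R * e] !=set0.
  apply/infinite_setN0/(infinite_setIl xA)/cofinite_set_near_infty.
  near=> n; rewrite /= -ltr_pdivrMr //.
  apply: (@lt_trans _ _ n%:R); last by rewrite ltr_nat.
  by near: n; exact: nbhs_infty_gtr.
suff : n.+1%:R * e <= M + f (- x) by rewrite leNgt n_large.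
have shift_le :=
  subadditive_lerB f_subadd (x + n.+1%:R *: g n) (n.+1%:R *: g n).
rewrite opprD addrCA subrr addr0 f_natM in shift_le.
have := fA _ Axn; have := ler_wpM2l (ler0n R n.+1) (gP n).2; lra.
Unshelve. all: by end_near. Qed.

End InvariantMetric.

Theorem corollary1p10 (R : realType) (X : topologicalLmodType R) (f : X -> R) :
  linear_metric_space X -> sublinear f ->
  ((exists A : set X, shift_compact A /\ bounded_above_on f A) <-> continuous f).
Proof.
move=> [d d_inv] [f_subadd f_natM]; split.
- move=> [A [A_sc f_bounded]]; apply: (subadditive_continuous f_subadd).
  exact: (shift_compact_bounded_small d_inv f_subadd f_natM A A_sc f_bounded).
- move=> f_cont; exists [set y | f y < f 0 + 1]; split.
    apply: nbhs0_shift_compact; near=> y.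
    have : `|f 0 - f y| < 1.
      by near: y; exact: (cvgrPdist_lt _ _).1 (f_cont 0) 1 ltr01.
    by rewrite ltr_distlC => /andP[].
  by exists (f 0 + 1) => y /ltW.
Unshelve. all: by end_near. Qed.
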